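(* Let $\phi:\mathscr{M}[\underline x]\to\mathbb{R}$ be a homomorphism of $\mathbb{R}$-algebras. The following are equivalent: (i) $\phi(\mathtt{m}(f^2))\ge0$ for all $f\in\mathscr{M}[\underline x]$; (ii) $\phi(\mathtt{m}(p^2))\ge0$ for all $p\in\mathbb{R}[\underline x]$; (iii) the real matrix $(\phi(\mathtt{m}(uv)))_{u,v\in[\underline x]_d}$ is positive semidefinite for all $d\in\mathbb{N}$.
   Context: Let $\mathbb{R}[\underline x]=\mathbb{R}[x_1,\dots,x_n]$, $\mathscr{M}=\mathbb{R}[\mathtt{m}_{i_1,\dots,i_n}\colon (i_1,\dots,i_n)\in\mathbb{N}_0^n]$ the polynomial ring in countably many indeterminates with $\mathtt{m}_{0,\dots,0}:=1$, $\mathscr{M}[\underline x]=\mathscr{M}\otimes_{\mathbb{R}}\mathbb{R}[\underline x]$, and $\mathtt{m}:\mathscr{M}[\underline x]\to\mathscr{M}$ the unique $\mathscr{M}$-linear map with $\mathtt{m}(x_1^{i_1}\cdots x_n^{i_n})=\mathtt{m}_{i_1,\dots,i_n}$. $[\underline x]_d$ denotes the set of monomials in $x_1,\dots,x_n$ of degree at most $d$. *)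

From HB Require Import structures.
From mathcomp Require Import all_boot all_order all_algebra.
From mathcomp Require Import reals.
From mathcomp.multinomials Require mpoly monalg.

Set Implicit Arguments.
Unset Strict Implicit.
Unset Printing Implicit Defensive.

Import Order.TTheory GRing.Theory Num.Theory.
Local Open Scope ring_scope.

Module MomIdxDef.
Import mpoly.
(* Index set of the moment indeterminates m_alpha, alpha in N_0^n, alpha <> 0
   (m_0 is not an indeterminate: m_0 := 1). *)
Definition MomIdx (n : nat) : choiceType := {a : 'X_{1..n} | a != 0%MM}.
End MomIdxDef.
Export MomIdxDef.

Module MomAlg.
Import monalg.
(* scriptM = R[m_alpha : alpha in N_0^n, alpha <> 0]: the polynomial ring in
   countably many indeterminates, i.e. the commutative monoid algebra over R of
   the free commutative monoid on MomIdx n. *)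
Definition Mring (R : comNzRingType) (n : nat) : Type :=
  malg (cmonom (MomIdx n)) R.

Section Inst.
Variables (R : comNzRingType) (n : nat).
HB.instance Definition _ := GRing.ComAlgebra.on (Mring R n).
End Inst.

Definition mgen (R : comNzRingType) (n : nat) (b : MomIdx n) : Mring R n :=
  mkmalgU (ucm b) (1 : R).
End MomAlg.
Export MomAlg.

From mathcomp.multinomials Require Import mpoly.

Definition mvar (R : comNzRingType) (n : nat) (a : 'X_{1..n}) : Mring R n :=
  oapp (@mgen R n) 1 (insub a : option (MomIdx n)).

(* scriptM[x] = scriptM (x)_R R[x] = scriptM[x_1, ..., x_n] *)
Definition MX (R : comNzRingType) (n : nat) := {mpoly (Mring R n)[n]}.

Definition mom (R : comNzRingType) (n : nat) (f : MX R n) : Mring R n :=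
  \sum_(mu <- msupp f) f@_mu * mvar R mu.

Definition incM (R : comNzRingType) (n : nat) (c : Mring R n) : MX R n := c%:MP.

Definition incR (R : comNzRingType) (n : nat) (r : R) : Mring R n := r%:A.

Definition incRX (R : comNzRingType) (n : nat) (p : {mpoly R[n]}) : MX R n :=
  map_mpoly (@incR R n) p.

Definition psd (R : realFieldType) (T : finType) (A : T -> T -> R) : Prop :=
  (forall u v, A u v = A v u) /\
  (forall c : T -> R, 0 <= \sum_(u : T) \sum_(v : T) c u * A u v * c v).

From HB Require Import structures.
From mathcomp Require Import all_boot all_order all_algebra.
From mathcomp Require Import reals.
From mathcomp.multinomials Require Import mpoly.
From mathcomp.multinomials Require ssrcomplements.

(* With L := phi o m, the value L(f^2) of f = \sum_u a_u x^u is the quadratic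
   form \sum_(u,v) phi(a_u) L(x^u x^v) phi(a_v) of the moment matrix (iii) at
   the real vector (phi(a_u))_u.  So (i) says the moment matrices are
   nonnegative on such vectors, and (ii) says the same for vectors coming from
   real coefficients a_u, which already give all real vectors since phi fixes R. *)

Import Order.TTheory GRing.Theory Num.Theory.
Local Open Scope ring_scope.

Section Moment.
Context {R : comNzRingType} {n : nat}.
Implicit Types (f g : MX R n) (c : Mring R n).

Lemma momwE k f : (msize f <= k)%N ->
  mom f = \sum_(m : 'X_{1..n < k}) f@_m * mvar R m.
Proof.
move=> le_fk; rewrite /mom (ssrcomplements.big_mksub 'X_{1..n < k}) //=.
- by rewrite big_rmcond //= => m /memN_msupp_eq0 ->; rewrite mul0r.
- exact: msupp_uniq.
by move=> m /msize_mdeg_lt /leq_trans; apply.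
Qed.
Arguments momwE [k f].

Lemma mom_is_zmod_morphism : zmod_morphism (@mom R n).
Proof.
move=> f g; pose k := maxn (msize f) (msize g).
have le_fk : (msize f <= k)%N by rewrite leq_maxl.
have le_gk : (msize g <= k)%N by rewrite leq_maxr.
have le_fgk : (msize (f - g) <= k)%N.
  by apply: leq_trans (msizeD_le _ _) _; rewrite msizeN geq_max le_fk le_gk.
rewrite !(momwE le_fk, momwE le_gk, momwE le_fgk) -sumrB.
by apply: eq_bigr => m _; rewrite mcoeffB mulrBl.
Qed.

HB.instance Definition _ :=
  GRing.isZmodMorphism.Build (MX R n) (Mring R n) (@mom R n)
    mom_is_zmod_morphism.

Lemma momZ c f : mom (c *: f) = c * mom f.
Proof.
rewrite (momwE (msizeZ_le f c)) (momwE (leqnn _)) mulr_sumr.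
by apply: eq_bigr => m _; rewrite mcoeffZ mulrA.
Qed.

Lemma incRX_lincomb k (c : 'X_{1..n < k} -> R) :
  incRX (\sum_(u : 'X_{1..n < k}) c u *: 'X_[u]) =
  \sum_(u : 'X_{1..n < k}) incR n (c u) *: 'X_[u].
Proof.
rewrite /incRX (rmorph_sum (map_mpoly (in_alg (Mring R n)))) /=.
by apply: eq_bigr => u _; rewrite map_mpolyZ map_mpolyX.
Qed.

End Moment.

Section MomentForm.
Context {R S : comNzRingType} {n : nat} (phi : {rmorphism MX R n -> S}).
Implicit Types (c : Mring R n) (g : MX R n).

Lemma rmorph_mom_sum (I : Type) (r : seq I) (F : I -> MX R n) :
  phi (incM (mom (\sum_(i <- r) F i))) = \sum_(i <- r) phi (incM (mom (F i))).
Proof. by rewrite raddf_sum /incM !rmorph_sum. Qed.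

Lemma rmorph_momZ c g :
  phi (incM (mom (c *: g))) = phi (incM c) * phi (incM (mom g)).
Proof. by rewrite momZ /incM !rmorphM. Qed.

Lemma rmorph_mom_sqr {k}
    {a : 'X_{1..n < k} -> Mring R n} {b : 'X_{1..n < k} -> S} :
    (forall u, phi (incM (a u)) = b u) ->
  phi (incM (mom ((\sum_(u : 'X_{1..n < k}) a u *: 'X_[u]) ^+ 2))) =
  \sum_(u : 'X_{1..n < k}) \sum_(v : 'X_{1..n < k})
    b u * phi (incM (mom ('X_[u] * 'X_[v]))) * b v.
Proof.
(* The occurrence selectors ([LHS] here, {1} in lemma3p1) stop rewrite from
   unfolding mom while matching the other phi-subterms, which is very slow. *)
move=> phi_ab; rewrite expr2 mulr_suml [LHS]rmorph_mom_sum; apply: eq_bigr => u _.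
rewrite mulr_sumr [LHS]rmorph_mom_sum; apply: eq_bigr => v _.
rewrite -scalerAl -scalerAr [LHS]rmorph_momZ [in LHS]rmorph_momZ.
by rewrite -!phi_ab mulrA mulrAC.
Qed.

End MomentForm.

Theorem lemma3p1 (R : realType) (n : nat) (phi : {rmorphism MX R n -> R})
  (phiR : forall r : R, phi (incM (incR n r)) = r) :
  [<-> forall f : MX R n, 0 <= phi (incM (mom (f ^+ 2)));
       forall p : {mpoly R[n]}, 0 <= phi (incM (mom ((incRX p) ^+ 2)));
       forall d : nat,
         psd (fun u v : 'X_{1..n < d.+1} =>
                phi (incM (mom ('X_[bmnm u] * 'X_[bmnm v] : MX R n))))].
Proof.
tfae.
- by move=> sqr_ge0 p; apply: sqr_ge0.
- move=> sqr_ge0 d; split=> [u v|c]; first by rewrite mulrC.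
  have := sqr_ge0 (\sum_(u : 'X_{1..n < d.+1}) c u *: 'X_[u]).
  by rewrite incRX_lincomb {1}(rmorph_mom_sqr phi (fun u => phiR (c u))).
- move=> psd_mom f; rewrite {1}(mpolywE (leqnSn (msize f))).
  rewrite {1}(rmorph_mom_sqr phi (fun u => erefl (phi (incM f@_u)))).
  exact: (psd_mom (msize f)).2.
Qed.
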